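(* Let $(\Sigma,E)$ be an algebraic theory with free monad $T$, and let $(X,I)$ be a $(\Sigma^{\mathrm{s}},E^{\mathrm{s}})$-algebra. Then the assignment $\alpha:TX\to X$, $\alpha(\overline{t})=I(t)_{I(\mathsf{a})}$ for $\Sigma$-terms $t$ over $X$, is a well-defined function, i.e. $I(t)_{I(\mathsf{a})}=I(s)_{I(\mathsf{a})}$ whenever $\overline{t}=\overline{s}$ in $TX$.
   Context: $T=T_{\Sigma,E}$: $TX$ is the set of $\Sigma$-terms over $X$ modulo the smallest congruence containing all substitution instances of $E$; $\overline{t}$ denotes the class of $t$. For a $\Sigma^{\mathrm{s}}$-algebra $(X,I)$ and a function $f:X\to X$, $I(t)_f$ is the value of the $\Sigma$-term $t$ over $X$ obtained by sending each element $x$ occurring as a variable to $f(x)$ and interpreting operations via $I$; here $f=I(\mathsf{a})$. The theory $(\Sigma^{\mathrm{s}},E^{\mathrm{s}})$: $\Sigma^{\mathrm{s}}=\Sigma\uplus\{\mathsf{a}:1\}$ and $E^{\mathrm{s}}$ consists of $\mathsf{a}\mathsf{a}v_1=\mathsf{a}v_1$; $\mathsf{a}(\mathsf{op}(v_1,\dots,v_n))=\mathsf{op}(v_1,\dots,v_n)$ and $\mathsf{op}(\mathsf{a}v_1,\dots,\mathsf{a}v_n)=\mathsf{op}(v_1,\dots,v_n)$ for every $(\mathsf{op}:n)\in\Sigma$; and $t(\mathsf{a}v_1,\dots,\mathsf{a}v_n)=s(\mathsf{a}v_1,\dots,\mathsf{a}v_n)$ for every equation $t(v_1,\dots,v_n)=s(v_1,\dots,v_n)$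 in $E$. *)

From mathcomp Require Import all_boot.
Set Implicit Arguments. Unset Strict Implicit. Unset Printing Implicit Defensive.

Record signature := Signature { op :> Type; arity : op -> nat }.

Inductive term (S : signature) (V : Type) : Type :=
| Var : V -> term S V
| Op : forall o : S, ('I_(arity o) -> term S V) -> term S V.
Arguments Var {S V} _.
Arguments Op {S V} o _.

Definition interp (S : signature) (X : Type) :=
  forall o : S, ('I_(arity o) -> X) -> X.

Fixpoint eval (S : signature) (X V : Type) (I : interp S X) (rho : V -> X)
  (t : term S V) : X :=
  match t with
  | Var v => rho v
  | Op o args => I o (fun i => eval I rho (args i))
  end.

Fixpoint subst (S : signature) (V W : Type) (sigma : V -> term S W)
  (t : term S V) : term S W :=
  match t with
  | Var v => sigma v
  | Op o args => Op o (fun i => subst sigma (args i))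
  end.

Definition equation (S : signature) := (term S nat * term S nat)%type.

Definition satisfies (S : signature) (X : Type) (I : interp S X)
  (E : equation S -> Prop) : Prop :=
  forall l r, E (l, r) -> forall rho : nat -> X, eval I rho l = eval I rho r.

(* The smallest congruence on S-terms over X containing all substitution
   instances of E; TX is term S X modulo this relation. *)
Inductive cong (S : signature) (E : equation S -> Prop) (X : Type) :
  term S X -> term S X -> Prop :=
| cong_inst : forall l r (sigma : nat -> term S X),
    E (l, r) -> cong E (subst sigma l) (subst sigma r)
| cong_refl : forall t, cong E t t
| cong_sym : forall t s, cong E t s -> cong E s t
| cong_trans : forall t s u, cong E t s -> cong E s u -> cong E t u
| cong_op : forall (o : S) (args1 args2 : 'I_(arity o) -> term S X),
    (forall i, cong E (args1 i) (args2 i)) -> cong E (Op o args1) (Op o args2).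

(* The extended signature Sigma^s = Sigma + {a : 1}; None is the symbol a. *)
Definition ext_sig (S : signature) : signature :=
  @Signature (option S)
    (fun o => match o with Some o => arity o | None => 1%N end).

Fixpoint embed (S : signature) (V : Type) (t : term S V) : term (ext_sig S) V :=
  match t with
  | Var v => Var v
  | Op o args => @Op (ext_sig S) V (Some o) (fun i => embed (args i))
  end.

Definition aT (S : signature) (V : Type) (u : term (ext_sig S) V)
  : term (ext_sig S) V := @Op (ext_sig S) V None (fun _ => u).

Inductive ext_eqs (S : signature) (E : equation S -> Prop) :
  equation (ext_sig S) -> Prop :=
| es_idem : ext_eqs E (aT (aT (Var 0%N)), aT (Var 0%N))
| es_a_op : forall o : S,
    ext_eqs E (aT (@Op (ext_sig S) nat (Some o) (fun i => Var (nat_of_ord i))),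
               @Op (ext_sig S) nat (Some o) (fun i => Var (nat_of_ord i)))
| es_op_a : forall o : S,
    ext_eqs E (@Op (ext_sig S) nat (Some o) (fun i => aT (Var (nat_of_ord i))),
               @Op (ext_sig S) nat (Some o) (fun i => Var (nat_of_ord i)))
| es_E : forall t s, E (t, s) ->
    ext_eqs E (subst (fun v => aT (Var v)) (embed t),
               subst (fun v => aT (Var v)) (embed s)).

Definition reduct (S : signature) (X : Type) (I : interp (ext_sig S) X)
  : interp S X := fun o args => I (Some o) args.

Definition Ia (S : signature) (X : Type) (I : interp (ext_sig S) X) : X -> X :=
  fun x => I None (fun _ => x).

(* I(t)_f with f = I(a): the value of the Sigma-term t over X. *)
Definition alpha (S : signature) (X : Type) (I : interp (ext_sig S) X)
  (t : term S X) : X := eval (reduct I) (Ia I) t.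

From mathcomp Require Import all_boot.
From Stdlib Require Import FunctionalExtensionality.

(* The fixed points of I(a) form a Sigma-subalgebra of the reduct (by
   a(op(v)) = op(v)) on which E holds (E^s says E holds on a-images), and
   evaluating a Sigma-term under the valuation I(a) lands in it. Equational
   logic is sound for such a subalgebra, which gives the theorem. *)

Section Evaluation.

Variables (S : signature) (X : Type) (J : interp S X).

Lemma eval_subst (V W : Type) (sigma : V -> term S W) (rho : W -> X)
    (t : term S V) :
  eval J rho (subst sigma t) = eval J (fun v => eval J rho (sigma v)) t.
Proof.
elim: t => [v|o args IH] //=.
by congr (J o _); apply: functional_extensionality => i; exact: IH.
Qed.

Variable P : X -> Prop.
Hypothesis P_op : forall o args, (forall i, P (args i)) -> P (J o args).

Lemma eval_closed (V : Type) (rho : V -> X) (t : term S V) :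
  (forall v, P (rho v)) -> P (eval J rho t).
Proof. by move=> Prho; elim: t => [v|o args IH] /=; [exact: Prho | exact: P_op]. Qed.

Variable E : equation S -> Prop.
Hypothesis J_satisfies_on_P :
  forall l r, E (l, r) -> forall rho : nat -> X, (forall v, P (rho v)) ->
  eval J rho l = eval J rho r.

Lemma eval_cong (V : Type) (rho : V -> X) (t s : term S V) :
  (forall v, P (rho v)) -> cong E t s -> eval J rho t = eval J rho s.
Proof.
move=> Prho; elim=> {t s} [l r sigma Elr | t | t s _ -> | t s u _ -> _ -> |] //.
- rewrite !eval_subst; apply: J_satisfies_on_P => // v.
  exact: eval_closed.
- move=> o args1 args2 _ IH /=.
  by congr (J o _); apply: functional_extensionality => i; exact: IH.
Qed.

End Evaluation.

Lemma eval_embed (S : signature) (X V : Type) (I : interp (ext_sig S) X)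
    (rho : V -> X) (t : term S V) :
  eval I rho (embed t) = eval (reduct I) rho t.
Proof.
elim: t => [v|o args IH] //=.
by congr (I (Some o) _); apply: functional_extensionality => i; exact: IH.
Qed.

Section FixedPointsOfA.

Context {S : signature} {E : equation S -> Prop} {X : Type}.
Context {I : interp (ext_sig S) X}.
Hypothesis I_satisfies : satisfies I (ext_eqs E).

Lemma Ia_idem (x : X) : Ia I (Ia I x) = Ia I x.
Proof. exact: (I_satisfies _ _ (es_idem E) (fun _ => x)). Qed.

Lemma Ia_op (o : S) (args : 'I_(arity o) -> X) :
  Ia I (I (Some o) args) = I (Some o) args.
Proof.
pose rho n := if insub n is Some i then args i else I (Some o) args.
have rho_args : (fun i : 'I_(arity o) => rho (nat_of_ord i)) = args.
  by apply: functional_extensionality => i; rewrite /rho valK.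
have := I_satisfies _ _ (es_a_op E o) rho.
by rewrite /= rho_args.
Qed.

Lemma reduct_satisfies_on_fixed (l r : term S nat) (rho : nat -> X) :
  E (l, r) -> (forall v, Ia I (rho v) = rho v) ->
  eval (reduct I) rho l = eval (reduct I) rho r.
Proof.
move=> Elr rho_fixed.
have := I_satisfies _ _ (es_E Elr) rho.
rewrite !eval_subst !eval_embed /=.
have -> // : (fun v => I None (fun _ => rho v)) = rho.
exact: functional_extensionality.
Qed.

End FixedPointsOfA.

Theorem lemma12 (S : signature) (E : equation S -> Prop) (X : Type)
  (I : interp (ext_sig S) X) (HI : satisfies I (ext_eqs E))
  (t s : term S X) :
  cong E t s -> alpha I t = alpha I s.
Proof.
apply: (@eval_cong _ _ (reduct I) (fun x => Ia I x = x))
  => [o args _ | l r Elr rho | x].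
- exact: (Ia_op HI o args).
- exact: (reduct_satisfies_on_fixed HI).
- exact: (Ia_idem HI).
Qed.
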